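(* Let $-\beta\in(0,1)$, $c\in(0,1)$ and let $n\geq 2$ be an integer. Let $C_n=-\beta+\frac{(n+1)c}{1-c}$ and assume that $M_n(C_n;\beta,c)\neq 0$. Then the $n+1$ zeros of the polynomial $(x-C_n)M_n(x;\beta,c)$ interlace with the $n+1$ zeros of $M_{n+1}(x;\beta+1,c)$.
   Context: Monic Meixner polynomials are defined by $$M_n(x;\beta,c)=\left(\frac{c}{c-1}\right)^n(\beta)_n\sum_{k=0}^{n}\frac{(-n)_k(-x)_k(1-\frac1c)^k}{(\beta)_k\,k!},$$ for real $\beta,c$ with $c\neq 0$ and $\beta\notin\{-1,-2,\dots,-n+1\}$, where $(\alpha)_0=1$ and $(\alpha)_k=\alpha(\alpha+1)\cdots(\alpha+k-1)$ for $k\geq1$. For the parameters considered, the zeros of $M_n(x;\beta,c)$ and of $M_{n+1}(x;\beta+1,c)$ are real and distinct. Two sets of $m$ real numbers each ''interlace'' if, when all $2m$ numbers are listed in increasing order, they are distinct and elements of the two sets strictly alternate. *)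

From HB Require Import structures.
From mathcomp Require Import all_boot all_order all_algebra.
From mathcomp Require Import reals.
Set Implicit Arguments. Unset Strict Implicit. Unset Printing Implicit Defensive.
Import Order.TTheory GRing.Theory Num.Theory.
Local Open Scope ring_scope.

Definition poch {R : ringType} (a : R) (k : nat) : R :=
  \prod_(i < k) (a + i%:R).

Definition poch_negX {R : ringType} (k : nat) : {poly R} :=
  \prod_(i < k) (i%:R%:P - 'X).

(* Monic Meixner polynomial M_n(x; beta, c). *)
Definition meixner {R : fieldType} (n : nat) (beta c : R) : {poly R} :=
  ((c / (c - 1)) ^+ n * poch beta n) *:
    \sum_(k < n.+1)
      ((poch (- (n%:R)) k * (1 - c^-1) ^+ k / (poch beta k * (k`!)%:R))
         *: poch_negX k).

Definition alt {R : numDomainType} (s t : seq R) : Prop :=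
  forall i, (i < size s)%N ->
    s`_i < t`_i /\ ((i.+1 < size s)%N -> t`_i < s`_i.+1).

Definition interlace {R : numDomainType} (s t : seq R) : Prop :=
  size s = size t /\ (alt s t \/ alt t s).

From HB Require Import structures.
From mathcomp Require Import all_boot all_order all_algebra.
From mathcomp Require Import reals.
From mathcomp Require Import ring lra zify polyrcf.
Import Order.TTheory GRing.Theory Num.Theory.
Local Open Scope ring_scope.

(* Expanding M_n(x; g, c) in the falling factorials x(x-1)...(x-k+1) turns the
   three-term recurrence
     M_(m+2) = (x - b_(m+1)) M_(m+1) - l_(m+1) M_m,  with l_(m+1) > 0 when g > 0,
   and the contiguous relation
     (x - C_n) M_n(x; g+1) - M_(n+1)(x; g+1) = (g + n) / (1 - c) * M_n(x; g)
   into coefficientwise identities.  By the recurrence, the zeros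
   t_0 < ... < t_n of M_(n+1)(x; beta+1) interlace those of M_n(x; beta+1),
   which therefore has sign (-1)^(n-i) at t_i.  At t_i the contiguous relation
   with g = beta gives (t_i - C_n) M_n(t_i; beta) = (t_i - C_n)^2 / k *
   M_n(t_i; beta+1) with k > 0, and t_i <> C_n since M_n(C_n; beta) <> 0.  So
   the monic polynomial (x - C_n) M_n(x; beta) of degree n+1 has the same
   alternating signs at the t_i, and the intermediate value theorem puts one of
   its zeros below t_0 and one in each interval (t_(i-1), t_i). *)

Definition falling {R : pzRingType} (a : R) (j : nat) : R :=
  \prod_(i < j) (a - i%:R).

Definition fallingX {R : nzRingType} (j : nat) : {poly R} :=
  \prod_(i < j) ('X - i%:R%:P).

Section Falling.
Variable R : comNzRingType.
Implicit Types (a : R) (n k j : nat).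

Lemma falling0 a : falling a 0 = 1.
Proof. by rewrite /falling big_ord0. Qed.

Lemma fallingS a j : falling a j.+1 = falling a j * (a - j%:R).
Proof. by rewrite /falling big_ord_recr. Qed.

Lemma fallingSl a j : falling a j.+1 = a * falling (a - 1) j.
Proof.
rewrite /falling big_ord_recl subr0; congr (_ * _); apply: eq_bigr => i _.
by rewrite /bump /= -natr1; ring.
Qed.

Lemma falling_natr n j : falling (n%:R : R) j = (n ^_ j)%:R.
Proof.
elim: j n => [|j IH] [|n]; rewrite ?falling0 ?ffactn0 //.
  by rewrite fallingSl ffact_small // mul0r.
by rewrite fallingSl -natr1 addrK IH ffactSS natrM natr1.
Qed.

Lemma poch_opp_natr n k : poch (- n%:R : R) k = (-1) ^+ k * falling n%:R k.
Proof.
rewrite /poch /falling -[k in (-1) ^+ k]card_ord -prodrN.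
by apply: eq_bigr => i _; rewrite opprB addrC.
Qed.

Lemma pochD a k j :
  poch a (k + j) = poch a k * falling (a + (k + j)%:R - 1) j.
Proof.
elim: j => [|j IH]; first by rewrite addn0 falling0 mulr1.
rewrite addnS /poch big_ord_recr /= -/(poch a (k + j)) IH fallingSl -mulrA.
congr (_ * _); rewrite mulrC -!natr1; congr (_ * falling _ _); ring.
Qed.

End Falling.

(* [d j] is the coefficient of [fallingX (m - j)]: indexing from the top
   degree makes multiplication by 'X a shift of the coefficients. *)
Definition ffseries {R : nzRingType} (d : nat -> R) (m : nat) : {poly R} :=
  \sum_(j < m.+1) d j *: fallingX (m - j).

Section FallingBasis.
Variable R : comNzRingType.
Implicit Types (d e : nat -> R) (m j : nat).

Lemma fallingXS j : fallingX j.+1 = fallingX j * ('X - j%:R%:P) :> {poly R}.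
Proof. by rewrite /fallingX big_ord_recr. Qed.

Lemma mulX_fallingX j :
  'X * fallingX j = fallingX j.+1 + j%:R *: fallingX j :> {poly R}.
Proof. by rewrite fallingXS mulrBr -mul_polyC; ring. Qed.

Lemma fallingX_monic j : (fallingX j : {poly R}) \is monic.
Proof. exact: monic_prod_XsubC. Qed.

Lemma size_fallingX j : size (fallingX j : {poly R}) = j.+1.
Proof.
elim: j => [|j IH]; first by rewrite /fallingX big_ord0 size_poly1.
by rewrite fallingXS size_Mmonic ?monicXsubC ?size_XsubC ?IH ?addn2 // -size_poly_eq0 IH.
Qed.

Lemma poch_negX_fallingX (k : nat) :
  poch_negX k = (-1) ^+ k *: fallingX k :> {poly R}.
Proof.
rewrite /poch_negX /fallingX -mul_polyC -[k in (-1) ^+ k]card_ord.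
rewrite rmorphXn rmorphN1 -prodrN.
by apply: eq_bigr => i _; rewrite opprB.
Qed.

Lemma eq_ffseries d e m :
  (forall j, (j <= m)%N -> d j = e j) -> ffseries d m = ffseries e m.
Proof. by move=> de; apply: eq_bigr => j _; rewrite de // -ltnS. Qed.

Lemma scale_ffseries (a : R) d m : a *: ffseries d m = ffseries (fun j => a * d j) m.
Proof. by rewrite /ffseries scaler_sumr; apply: eq_bigr => j _; rewrite scalerA. Qed.

Lemma ffseriesB d e m :
  ffseries d m - ffseries e m = ffseries (fun j => d j - e j) m.
Proof. by rewrite /ffseries -sumrB; apply: eq_bigr => j _; rewrite scalerBl. Qed.

Lemma ffseries_shift d m :
  ffseries d m = ffseries (fun j => if j is j'.+1 then d j' else 0) m.+1.
Proof.
rewrite /ffseries [RHS]big_ord_recl /= scale0r add0r; apply: eq_bigr => j _.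
by rewrite /bump /= add1n subSS.
Qed.

Lemma ffseries_shift2 d m :
  ffseries d m = ffseries (fun j => if j is j'.+2 then d j' else 0) m.+2.
Proof. by rewrite 2!ffseries_shift; apply: eq_ffseries => -[|[|j]]. Qed.

Lemma mulX_ffseries d m : d m.+1 = 0 ->
  'X * ffseries d m =
  ffseries (fun j => d j + (if j is j'.+1 then (m - j')%:R * d j' else 0)) m.+1.
Proof.
move=> dm0; rewrite /ffseries.
under [RHS]eq_bigr do rewrite scalerDl.
rewrite big_split /= mulr_sumr [X in _ = X + _]big_ord_recr /= dm0 scale0r addr0.
rewrite [X in _ = _ + X]big_ord_recl /= scale0r add0r -big_split /=.
apply: eq_bigr => j _; rewrite -scalerAr mulX_fallingX scalerDr scalerA.
by rewrite /bump /= add1n subSS subSn 1?mulrC // -ltnS.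
Qed.

Lemma ffseries_lead d m : d 0%N = 1 ->
  exists2 q : {poly R}, (size q <= m)%N & ffseries d m = fallingX m + q.
Proof.
move=> d0; rewrite /ffseries big_ord_recl /= d0 scale1r subn0.
eexists; last reflexivity.
elim/big_ind: _ => [|p q hp hq|i _]; first by rewrite size_poly0.
  by rewrite (leq_trans (size_polyD _ _)) // geq_max hp hq.
rewrite (leq_trans (size_scale_leq _ _)) // size_fallingX /bump /=.
by have := ltn_ord i; lia.
Qed.

Lemma ffseries_monic d m : d 0%N = 1 -> ffseries d m \is monic.
Proof.
move=> d0; have [q hq ->] := ffseries_lead d m d0.
by rewrite monicE lead_coefDl ?(monicP (fallingX_monic m)) // size_fallingX ltnS.
Qed.

Lemma size_ffseries d m : d 0%N = 1 -> size (ffseries d m) = m.+1.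
Proof.
move=> d0; have [q hq ->] := ffseries_lead d m d0.
by rewrite size_polyDl size_fallingX // ltnS.
Qed.

End FallingBasis.

Definition meixner_coef {R : fieldType} (g c : R) (n j : nat) : R :=
  falling n%:R j * falling (g + n%:R - 1) j / (j`!%:R * (1 - c^-1) ^+ j).

Section MeixnerExpansion.
Context {R : numFieldType} {c : R} (c_neq0 : c != 0) (c_neq1 : c != 1).
Implicit Types g : R.

Lemma meixner_coef0 g n : meixner_coef g c n 0 = 1.
Proof. by rewrite /meixner_coef !falling0 expr0 mulr1 mul1r invr1. Qed.

Lemma meixner_coef_top g n : meixner_coef g c n n.+1 = 0.
Proof. by rewrite /meixner_coef falling_natr ffact_small // !mul0r. Qed.

Let c'_neq0 : 1 - c != 0. Proof. by rewrite subr_eq0 eq_sym. Qed.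
Let c1_neq0 : c - 1 != 0. Proof. by rewrite subr_eq0. Qed.
Let u_neq0 : 1 - c^-1 != 0. Proof. by rewrite subr_eq0 eq_sym invr_eq1. Qed.

Let fact_neq0 i : i`!%:R != 0 :> R.
Proof. by rewrite pnatr_eq0 -lt0n fact_gt0. Qed.

Lemma meixner_coefE {g n k j} :
  (forall i : nat, g + i%:R != 0) -> n = (k + j)%N ->
  (c / (c - 1)) ^+ n * poch g n *
    (poch (- n%:R) k * (1 - c^-1) ^+ k / (poch g k * k`!%:R)) * (-1) ^+ k
  = meixner_coef g c n j.
Proof.
move=> g_neq0 ->; rewrite /meixner_coef pochD poch_opp_natr !falling_natr.
have poch_neq0 : poch g k != 0 by apply/prodf_neq0 => i _.
have ffact_binom : ((k + j) ^_ k * j`! = (k + j) ^_ j * k`!)%N.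
  have := ffact_fact (leq_addr j k); have := ffact_fact (leq_addl k j).
  by rewrite addKn addnK => -> ->.
have -> : ((k + j) ^_ k)%:R = ((k + j) ^_ j)%:R * k`!%:R / j`!%:R :> R.
  by rewrite -natrM -ffact_binom natrM mulfK.
have -> : 1 - c^-1 = (c - 1) / c by field.
rewrite exprD !exprMn !exprVn -signr_odd.
by case: (odd k); rewrite ?expr1 ?expr0; field;
  rewrite !expf_neq0 // !fact_neq0 poch_neq0.
Qed.

Lemma meixner_ffseries {g} n : (forall i : nat, g + i%:R != 0) ->
  meixner n g c = ffseries (meixner_coef g c n) n.
Proof.
move=> g_neq0; rewrite /meixner /ffseries scaler_sumr (reindex_inj rev_ord_inj) /=.
apply: eq_bigr => j _; rewrite poch_negX_fallingX !scalerA subSS; congr (_ *: _).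
have nE : n = (n - j + j)%N by rewrite subnK // -ltnS.
by rewrite -(meixner_coefE g_neq0 nE) !mulrA.
Qed.

Lemma meixner_monic {g} n : (forall i : nat, g + i%:R != 0) ->
  meixner n g c \is monic.
Proof. by move=> g_neq0; rewrite meixner_ffseries ?ffseries_monic ?meixner_coef0. Qed.

Lemma size_meixner {g} n : (forall i : nat, g + i%:R != 0) ->
  size (meixner n g c) = n.+1.
Proof. by move=> g_neq0; rewrite meixner_ffseries ?size_ffseries ?meixner_coef0. Qed.

Lemma meixner0 {g} : (forall i : nat, g + i%:R != 0) -> meixner 0 g c = 1.
Proof.
move=> g_neq0; rewrite meixner_ffseries // /ffseries big_ord1 meixner_coef0.
by rewrite /fallingX big_ord0 scale1r.
Qed.

Lemma meixner_rec {g} m : (forall i : nat, g + i%:R != 0) ->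
  meixner m.+2 g c =
    ('X - ((m.+1%:R + (m.+1%:R + g) * c) / (1 - c))%:P) * meixner m.+1 g c
    - (m.+1%:R * (m.+1%:R + g - 1) * c / (1 - c) ^+ 2) *: meixner m g c.
Proof.
move=> g_neq0.
rewrite !meixner_ffseries // mulrBl mul_polyC mulX_ffseries ?meixner_coef_top //.
rewrite [ffseries (meixner_coef g c m.+1) _]ffseries_shift.
rewrite [ffseries (meixner_coef g c m) _]ffseries_shift2.
rewrite !scale_ffseries !ffseriesB; apply: eq_ffseries => j j_le.
rewrite /meixner_coef.
case: j j_le => [|[|j]] j_le /=.
- by rewrite !falling0 !mulr0 !subr0 addr0.
- rewrite !fallingS !falling0 !mul1r !mulr0 !subr0 subn0 -!natr1 expr1.
  by field; rewrite c'_neq0 c_neq0 c1_neq0.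
have e1 : g + m.+1%:R - 1 = (g + m%:R - 1) + 1 by rewrite -natr1; ring.
have e2 : g + m.+2%:R - 1 = (g + m%:R - 1) + 1 + 1 by rewrite -!natr1; ring.
rewrite (fallingS _ m.+1%:R j.+1) (fallingS _ (g + m.+1%:R - 1) j.+1) e1 e2.
rewrite !falling_natr !ffactSS !fallingSl !addrK !factS !natrM subSS natrB //.
rewrite -!natr1 !exprS.
by field; rewrite expf_neq0 // fact_neq0 c'_neq0 c_neq0 c1_neq0 !natr1 !pnatr_eq0.
Qed.

Lemma meixner_contiguous {g} n : (forall i : nat, g + i%:R != 0) ->
  ('X - (- g + n.+1%:R * c / (1 - c))%:P) * meixner n (g + 1) c
    - meixner n.+1 (g + 1) c
  = ((g + n%:R) / (1 - c)) *: meixner n g c.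
Proof.
move=> g_neq0; have g1_neq0 i : g + 1 + i%:R != 0 by rewrite -addrA nat1r.
rewrite !meixner_ffseries // mulrBl mul_polyC mulX_ffseries ?meixner_coef_top //.
rewrite [ffseries (meixner_coef (g + 1) c n) n]ffseries_shift.
rewrite [ffseries (meixner_coef g c n) n]ffseries_shift.
rewrite !scale_ffseries !ffseriesB; apply: eq_ffseries => j j_le.
have e0 : g + 1 + n%:R - 1 = g + n%:R by ring.
have e1 : g + 1 + n.+1%:R - 1 = g + n%:R + 1 by rewrite -natr1; ring.
rewrite /meixner_coef e0 e1.
case: j j_le => [|[|j]] j_le /=.
- by rewrite !falling0 !mulr0 !subr0 addr0 subrr.
- rewrite !fallingS !falling0 !mul1r ?mulr0 ?subr0 ?subn0 -!natr1 expr1.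
  by field; rewrite c'_neq0 c_neq0 c1_neq0.
rewrite (fallingS _ n%:R j.+1) (fallingS _ (g + n%:R) j.+1).
rewrite (fallingSl _ n.+1%:R) (fallingSl _ (g + n%:R + 1)) -[n.+1%:R]natr1 !addrK.
rewrite !(fallingSl _ (g + n%:R) j) (fallingS _ (g + n%:R - 1) j).
rewrite !falling_natr !factS !natrM natrB // -!natr1 !exprS.
by field; rewrite expf_neq0 // fact_neq0 c'_neq0 c_neq0 c1_neq0 !natr1 !pnatr_eq0.
Qed.

End MeixnerExpansion.

Definition sign_alternating {R : numDomainType} (p : {poly R}) (t : seq R) :=
  forall i, (i < size t)%N -> 0 < (-1) ^+ ((size t).-1 - i) * p.[t`_i].

Section SignAlternation.
Context {R : realDomainType}.
Implicit Types (p q : {poly R}) (t : seq R) (x : R).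

Lemma sign_alternating_pmul p q t :
  (forall x, x \in t -> exists2 w, 0 < w & q.[x] = w * p.[x]) ->
  sign_alternating p t -> sign_alternating q t.
Proof.
move=> qp p_alt i it; have [w w_gt0 ->] := qp _ (mem_nth 0 it).
by rewrite mulrCA mulr_gt0 ?p_alt.
Qed.

Lemma sign_prod_sub t x : x \notin t ->
  0 < (-1) ^+ count (fun y => x < y) t * \prod_(y <- t) (x - y).
Proof.
elim: t => [|y t IH]; first by rewrite big_nil mulr1 expr0.
rewrite in_cons negb_or big_cons /= => /andP[x_neq_y /IH].
set s := (-1) ^+ _; set P := \prod_(_ <- t) _ => sP.
by case: (ltgtP x y) x_neq_y => // xy _; rewrite ?add1n ?add0n ?exprS -/s; nra.
Qed.

Lemma count_gt_sorted {t x j} : sorted <%R t -> (j <= size t)%N ->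
  ((0 < j)%N -> t`_j.-1 < x) -> ((j < size t)%N -> x < t`_j) ->
  count (fun y => x < y) t = (size t - j)%N.
Proof.
elim: t j => [|y t IH] j //= t_sorted jt lt_x x_lt.
have y_lt z : z \in t -> y < z := allP (order_path_min lt_trans t_sorted) z.
case: j jt lt_x x_lt => [|j] jt lt_x x_lt.
  rewrite x_lt // add1n subn0; congr S; apply/eqP; rewrite -all_count.
  by apply/allP => z /y_lt; apply: lt_trans (x_lt isT).
have y_le_x : y <= x.
  case: j jt lt_x {x_lt} => [|j] jt lt_x; first exact/ltW/lt_x.
  exact/ltW/(lt_trans (y_lt _ (mem_nth 0 jt)) (lt_x isT)).
rewrite ltNge y_le_x add0n subSS (IH j (path_sorted t_sorted)) //.
by case: j {jt x_lt IH} lt_x => // j lt_x _; apply: lt_x.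
Qed.

End SignAlternation.

Definition alternates_at_roots {R : realDomainType} (p q : {poly R}) :=
  exists t : seq R, [/\ size t = (size q).-1, sorted <%R t,
    forall x, root q x = (x \in t) & sign_alternating p t].

Section RootLocation.
Context {R : rcfType}.
Implicit Types (p q : {poly R}) (t u : seq R).

Lemma poly_ivt_chain {p u} : sorted <%R u ->
  (forall i, (i.+1 < size u)%N -> p.[u`_i] * p.[u`_i.+1] < 0) ->
  exists2 r : seq R, size r = (size u).-1 &
    forall i, (i < size r)%N -> (u`_i < r`_i < u`_i.+1) && root p r`_i.
Proof.
elim: u => [|x [|y u] IH] u_sorted sgn; try by exists [::].
have [r rsz r_btw] := IH (path_sorted u_sorted) (fun i => sgn i.+1).
have [z z_in pz] := poly_ivtoo (ltW (andP u_sorted).1) (sgn 0%N isT).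
exists (z :: r); first by rewrite /= rsz.
case=> [|i] i_lt /=; last exact: r_btw.
by rewrite pz andbT; rewrite in_itv /= in z_in.
Qed.

Lemma poly_pos_right p z : 0 < lead_coef p -> exists2 b, z < b & 0 < p.[b].
Proof.
move=> lc_gt0; have [n0 n0_le] := poly_pinfty_gt_lc lc_gt0.
exists (Num.max n0 (z + 1)); first by rewrite lt_max ltrDl ltr01 orbT.
by rewrite (lt_le_trans lc_gt0) // n0_le // le_max lexx.
Qed.

Lemma poly_sign_left p z : 0 < lead_coef p ->
  exists2 a, a < z & 0 < (-1) ^+ (size p).-1 * p.[a].
Proof.
move=> lc_gt0; set q := (-1) ^+ (size p).-1 *: (p \Po - 'X).
have lc_q : lead_coef q = lead_coef p.
  rewrite lead_coefZ lead_coef_comp ?size_polyN ?size_polyX // lead_coefN lead_coefX.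
  by rewrite mulrCA -exprMn mulrNN mulr1 expr1n mulr1.
have [b zb qb] : exists2 b, - z < b & 0 < q.[b] by apply: poly_pos_right; rewrite lc_q.
exists (- b); first by rewrite ltrNl.
by rewrite /q hornerZ horner_comp hornerN hornerX in qb.
Qed.

Lemma roots_between_alternating {p u} : p != 0 -> (size p <= size u)%N ->
  sorted <%R u -> sign_alternating p u ->
  exists r : seq R, [/\ size r = (size u).-1,
    forall i, (i < size r)%N -> u`_i < r`_i < u`_i.+1,
    forall x, root p x = (x \in r) & sorted <%R r].
Proof.
move=> p_neq0 size_p u_sorted p_alt.
have sgn i : (i.+1 < size u)%N -> p.[u`_i] * p.[u`_i.+1] < 0.
  move=> iu; have := p_alt i (ltnW iu); have := p_alt i.+1 iu.
  have i_lt : (i < (size u).-1)%N by rewrite -ltnS prednK // (leq_ltn_trans _ iu).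
  rewrite -(subnSK i_lt).
  set s := (-1) ^+ _; have ss : s * s = 1 by rewrite -expr2 sqrr_sign.
  by rewrite exprS -/s; nra.
have [r rsz r_btw] := poly_ivt_chain u_sorted sgn.
have r_sorted : sorted <%R r.
  apply/(sortedP 0) => i ir.
  have /andP[/andP[_ lt1] _] := r_btw i (ltnW ir).
  by have /andP[/andP[lt2 _] _] := r_btw i.+1 ir; apply: lt_trans lt2.
have r_roots : all (root p) r by apply/(all_nthP 0) => i /r_btw /andP[].
exists r; split => // [i /r_btw /andP[] //|x].
apply/idP/idP => [px|]; last by move/(allP r_roots).
apply/negPn/negP => x_notin_r.
have := max_poly_roots p_neq0 (_ : all (root p) (x :: r)).
rewrite /= x_notin_r (sorted_uniq lt_trans ltxx r_sorted) px r_roots rsz.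
move=> /(_ isT isT) /leq_trans /(_ size_p).
by case: (size u) => // n; rewrite ltnn.
Qed.

Lemma roots_interlace_left {p t} : p \is monic -> size p = (size t).+1 ->
  sorted <%R t -> sign_alternating p t ->
  exists s : seq R,
    [/\ size s = size t, alt s t & forall x, root p x = (x \in s)].
Proof.
move=> p_monic size_p t_sorted p_alt.
have [a a_lt pa] : exists2 a, a < t`_0 & 0 < (-1) ^+ (size p).-1 * p.[a].
  by apply: poly_sign_left; rewrite (monicP p_monic) ltr01.
have u_sorted : sorted <%R (a :: t).
  by case: t {size_p p_alt} t_sorted a_lt => //= y t ->; rewrite andbT.
have u_alt : sign_alternating p (a :: t).
  case=> [|i] i_lt /=; first by rewrite subn0; rewrite size_p in pa.
  by rewrite subnS -subn1 subnAC subn1; apply: p_alt.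
have p_neq0 : p != 0 by rewrite -size_poly_eq0 size_p.
have [s [ssz s_btw s_roots _]] :=
  roots_between_alternating (u := a :: t) p_neq0 (eq_leq size_p) u_sorted u_alt.
exists s; split => // i i_lt; split; first by have /andP[] := s_btw i i_lt.
by move=> i1_lt; have /andP[] := s_btw i.+1 i1_lt.
Qed.

Lemma roots_interlace_around {p t} : p \is monic -> size p = (size t).+2 ->
  sorted <%R t -> sign_alternating (- p) t ->
  exists s : seq R, [/\ size s = (size t).+1,
    forall i, (i < size t)%N -> s`_i < t`_i < s`_i.+1,
    forall x, root p x = (x \in s) & sorted <%R s].
Proof.
move=> p_monic size_p t_sorted p_alt.
have lc_gt0 : 0 < lead_coef p by rewrite (monicP p_monic) ltr01.
have [a a_lt pa] := poly_sign_left p t`_0 lc_gt0.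
have [b lt_b pb] := poly_pos_right p (last a t) lc_gt0.
set u := a :: rcons t b.
have size_u : size u = (size t).+2 by rewrite /= size_rcons.
have u_t i : (i < size t)%N -> u`_i.+1 = t`_i by rewrite /= nth_rcons => ->.
have u_sorted : sorted <%R u.
  rewrite /= rcons_path lt_b andbT.
  by case: t {size_p p_alt size_u u_t u lt_b} t_sorted a_lt => //= y t -> ->.
have u_alt : sign_alternating p u.
  rewrite /sign_alternating size_u; case=> [|i] i_lt.
    by rewrite subn0; rewrite size_p in pa.
  case: (ltngtP i (size t)) i_lt => [it _|ti|-> _] /=; last 2 first.
  - by rewrite !ltnS leqNgt ti.
  - by rewrite subnn expr0 mul1r nth_rcons ltnn eqxx.
  have -> : ((size t).+1 - i.+1 = ((size t).-1 - i).+1)%N.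
    by case: (size t) it => // n it; rewrite subSS subSn.
  by rewrite nth_rcons it exprS mulN1r mulNr -mulrN -hornerN p_alt.
have p_neq0 : p != 0 by rewrite -size_poly_eq0 size_p.
have [r [rsz r_btw r_roots r_sorted]] :=
  roots_between_alternating p_neq0 (eq_leq (etrans size_p (esym size_u)))
    u_sorted u_alt.
exists r; split => //; first by rewrite rsz size_u.
move=> i it; rewrite -u_t //.
have /andP[_ ->] : u`_i < r`_i < u`_i.+1 by apply: r_btw; rewrite rsz size_u ltnS ltnW.
by have /andP[-> _] : u`_i.+1 < r`_i.+1 < u`_i.+2 by apply: r_btw; rewrite rsz size_u.
Qed.

Lemma monic_sign_between_roots {p t x j} : p \is monic -> size p = (size t).+1 ->
  sorted <%R t -> (forall y, root p y = (y \in t)) -> ~~ root p x ->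
  (j <= size t)%N -> ((0 < j)%N -> t`_j.-1 < x) -> ((j < size t)%N -> x < t`_j) ->
  0 < (-1) ^+ (size t - j) * p.[x].
Proof.
move=> p_monic size_p t_sorted p_roots px jt lt_x x_lt.
have p_prod : p = \prod_(y <- t) ('X - y%:P).
  rewrite {1}(all_roots_prod_XsubC size_p) ?(monicP p_monic) ?scale1r //.
    by apply/allP => y; rewrite p_roots.
  by rewrite uniq_rootsE (sorted_uniq lt_trans ltxx t_sorted).
rewrite -(count_gt_sorted t_sorted jt lt_x x_lt) p_prod horner_prod.
under eq_bigr do rewrite hornerXsubC.
by apply: sign_prod_sub; rewrite -p_roots.
Qed.

Lemma alternates_at_roots1 p : p \is monic -> size p = 2 -> alternates_at_roots 1 p.
Proof.
move=> p_monic size_p; have nil_alt : sign_alternating (- p) [::] by [].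
have [s [ssz _ s_roots s_sorted]] :=
  roots_interlace_around (t := [::]) p_monic size_p isT nil_alt.
exists s; split => //; first by rewrite ssz size_p.
by move=> i; rewrite ssz ltnS leqn0 => /eqP ->; rewrite hornerC mulr1 expr0 ltr01.
Qed.

Lemma alternates_at_roots_rec p0 p1 p2 b l :
  p1 \is monic -> p2 \is monic -> size p2 = (size p1).+1 ->
  p2 = ('X - b%:P) * p1 - l *: p0 -> 0 < l ->
  alternates_at_roots p0 p1 -> alternates_at_roots p1 p2.
Proof.
move=> p1_monic p2_monic size_p2 p2E l_gt0 [t [tsz t_sorted t_roots p0_alt]].
have size_p1 : size p1 = (size t).+1.
  by rewrite tsz prednK // size_poly_gt0 monic_neq0.
have p2_root x : root p1 x -> p2.[x] = - l * p0.[x].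
  by move=> /eqP p1x; rewrite p2E hornerD hornerN hornerM p1x mulr0 hornerZ add0r mulNr.
have p2_alt : sign_alternating (- p2) t.
  apply: sign_alternating_pmul p0_alt => x; rewrite -t_roots => /p2_root p2x.
  by exists l; rewrite // hornerN p2x mulNr opprK.
have [s [ssz s_btw s_roots s_sorted]] :=
  roots_interlace_around p2_monic (etrans size_p2 (congr1 S size_p1))
    t_sorted p2_alt.
exists s; split => //; first by rewrite ssz size_p2 size_p1.
move=> i; rewrite ssz /= => i_le.
apply: (monic_sign_between_roots p1_monic size_p1 t_sorted t_roots) => //.
- apply/negP => p1s; have := p2_root _ p1s.
  have /eqP -> : root p2 s`_i by rewrite s_roots mem_nth // ssz.
  move/esym/eqP; rewrite mulf_eq0 oppr_eq0 gt_eqF //= => /eqP p0s.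
  move: p1s; rewrite t_roots => /(nthP 0) [k kt tk].
  by have := p0_alt k kt; rewrite tk p0s mulr0 ltxx.
- by case: i i_le => // i i_le _; have /andP[_ ->] := s_btw i i_le.
- by move=> it; have /andP[-> _] := s_btw i it.
Qed.

End RootLocation.

Lemma meixner_alternates_at_roots (R : rcfType) (g c : R) n :
  0 < g -> 0 < c < 1 -> alternates_at_roots (meixner n g c) (meixner n.+1 g c).
Proof.
move=> g_gt0 /andP[c_gt0 c_lt1].
have g_neq0 i : g + i%:R != 0 by rewrite gt_eqF // ltr_wpDr.
have [c_neq0 c_neq1] : c != 0 /\ c != 1 by rewrite gt_eqF // lt_eqF.
elim: n => [|n IH].
  rewrite (meixner0 c_neq0 c_neq1 g_neq0); apply: alternates_at_roots1.
    exact: meixner_monic.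
  exact: size_meixner.
apply: alternates_at_roots_rec (meixner_rec c_neq0 c_neq1 n g_neq0) _ IH.
- exact: meixner_monic.
- exact: meixner_monic.
- by rewrite !size_meixner.
rewrite divr_gt0 ?exprn_gt0 ?subr_gt0 // !mulr_gt0 //.
by rewrite -natr1 addrAC addrK ltr_wpDl.
Qed.

Lemma XsubC_meixner_at_root (R : realFieldType) (g c : R) n x :
  (forall i : nat, g + i%:R != 0) -> 0 < c < 1 -> 0 < g + n%:R ->
  let C := - g + n.+1%:R * c / (1 - c) in
  (meixner n g c).[C] != 0 -> root (meixner n.+1 (g + 1) c) x ->
  exists2 w, 0 < w &
    (('X - C%:P) * meixner n g c).[x] = w * (meixner n (g + 1) c).[x].
Proof.
move=> g_neq0 /andP[c_gt0 c_lt1] gn_gt0 C MC /eqP M1x.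
have [c_neq0 c_neq1] : c != 0 /\ c != 1 by rewrite gt_eqF // lt_eqF.
set k := (g + n%:R) / (1 - c).
have k_gt0 : 0 < k by rewrite divr_gt0 // subr_gt0.
have k_neq0 : k != 0 by rewrite gt_eqF.
have := congr1 (horner^~ x) (meixner_contiguous c_neq0 c_neq1 n g_neq0).
rewrite /= hornerD hornerN M1x subr0 hornerM hornerXsubC [(k *: _).[x]]hornerZ => rel.
have xC : x - C != 0.
  apply: contra MC; rewrite subr_eq0 => /eqP xC.
  have /eqP : k * (meixner n g c).[C] = 0 by rewrite -xC -rel xC subrr mul0r.
  by rewrite mulf_eq0 (negPf k_neq0).
exists ((x - C) ^+ 2 / k); first by rewrite divr_gt0 // exprn_even_gt0.
rewrite hornerM hornerXsubC.
have -> : (meixner n g c).[x] = (x - C) * (meixner n (g + 1) c).[x] / k.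
  by rewrite rel mulrAC divff ?mul1r.
by rewrite expr2; field.
Qed.

Theorem theorem3p6 (R : realType) (beta c : R) (n : nat) :
  0 < - beta < 1 -> 0 < c < 1 -> (2 <= n)%N ->
  (meixner n beta c).[- beta + n.+1%:R * c / (1 - c)] != 0 ->
  exists s t : seq R,
    [/\ size s = n.+1, size t = n.+1,
        (forall x, root (('X - (- beta + n.+1%:R * c / (1 - c))%:P)
                          * meixner n beta c) x = (x \in s)),
        (forall x, root (meixner n.+1 (beta + 1) c) x = (x \in t))
      & interlace s t].
Proof.
move=> /andP[nbeta_gt0 nbeta_lt1] c01 n_ge2 MC.
have [c_neq0 c_neq1] : c != 0 /\ c != 1.
  by case/andP: c01 => c_gt0 c_lt1; rewrite gt_eqF // lt_eqF.
have beta_neq0 i : beta + i%:R != 0.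
  case: i => [|i]; first by rewrite addr0 lt_eqF //; lra.
  by rewrite gt_eqF // -natr1; have := ler0n R i; lra.
have beta1_neq0 i : beta + 1 + i%:R != 0 by rewrite -addrA nat1r.
have [|t [tsz t_sorted t_roots M1_alt]] :=
  @meixner_alternates_at_roots R (beta + 1) c n _ c01; first lra.
rewrite size_meixner // in tsz.
set P := _ * meixner n beta c.
have P_monic : P \is monic by rewrite monicMl ?monicXsubC ?meixner_monic.
have size_P : size P = (size t).+1.
  rewrite size_Mmonic ?polyXsubC_eq0 ?meixner_monic //.
  by rewrite size_XsubC size_meixner ?tsz.
have P_alt : sign_alternating P t.
  apply: sign_alternating_pmul M1_alt => x; rewrite -t_roots.
  apply: XsubC_meixner_at_root => //.
  have : 2%:R <= n%:R :> R by rewrite ler_nat.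
  lra.
have [s [ssz s_alt s_roots]] := roots_interlace_left P_monic size_P t_sorted P_alt.
exists s, t; split; rewrite ?ssz ?tsz //.
by split; [rewrite ssz | left].
Qed.
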